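(* Let $1<p<\infty$ and $1<q<\infty$. Then there exists a measurable function $f$ on $\mathbb{R}^2$ such that almost every $x$-section $f_x$ and almost every $y$-section $f_y$ belong to $\operatorname{Lip}\frac1p$, the functions $x\mapsto\|f_x\|_{\operatorname{Lip}\frac1p}$ and $y\mapsto\|f_y\|_{\operatorname{Lip}\frac1p}$ both belong to $L^{p,q}(\mathbb{R})$, but $f\notin L^\infty(\mathbb{R}^2)$.
   Context: For a function $f$ on $\mathbb{R}^2$, $f_x(y)=f(x,y)$ and $f_y(x)=f(x,y)$ denote the sections. For $\varphi$ on $\mathbb{R}$, $\Delta_h\varphi(t)=\varphi(t+h)-\varphi(t)$; for $\alpha\in(0,1]$, $\operatorname{Lip}\alpha$ is the class of $\varphi\in L^\infty(\mathbb{R})$ with $\|\varphi\|^*_{\operatorname{Lip}\alpha}=\sup_{h>0}h^{-\alpha}\|\Delta_h\varphi\|_\infty<\infty$ ($\|\cdot\|_\infty$ the essential supremum), and $\|\varphi\|_{\operatorname{Lip}\alpha}=\|\varphi\|_\infty+\|\varphi\|^*_{\operatorname{Lip}\alpha}$. For measurable a.e. finite $g$ on $\mathbb{R}$ with $|\{|g|>s\}|<\infty$ for all $s>0$, $g^*$ is its non-increasing rearrangement on $(0,\infty)$, and $L^{p,q}(\mathbb{R})$ consists of such $g$ with $\|g\|_{L^{p,q}}=\left(\int_0^\infty(t^{1/p}g^*(t))^q\frac{dt}{t}\right)^{1/q}<\infty$. *)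

From HB Require Import structures.
From mathcomp Require Import all_boot all_order all_algebra.
From mathcomp Require Import all_classical all_reals all_analysis.
From mathcomp Require Import measurable_realfun ess_sup_inf.
Set Implicit Arguments. Unset Strict Implicit. Unset Printing Implicit Defensive.
Import Order.TTheory GRing.Theory Num.Theory.
Import numFieldNormedType.Exports.
Local Open Scope classical_set_scope.
Local Open Scope ring_scope.

Section defs.
Context {R : realType}.
Local Notation leb := (@lebesgue_measure R).

Definition supnorm (phi : R -> R) : \bar R :=
  ess_sup leb (fun t => (`|phi t|)%:E).

Definition lip_seminorm (alpha : R) (phi : R -> R) : \bar R :=
  ereal_sup [set ((h `^ (- alpha))%:E * supnorm (fun t => (phi (t + h) - phi t)%R))%E
            | h in `]0, +oo[%classic].

Definition lip_norm (alpha : R) (phi : R -> R) : \bar R :=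
  (supnorm phi + lip_seminorm alpha phi)%E.

Definition in_Lip (alpha : R) (phi : R -> R) : Prop :=
  [/\ measurable_fun setT phi, (supnorm phi < +oo)%E
    & (lip_seminorm alpha phi < +oo)%E].

Definition rearrangement (g : R -> \bar R) (t : R) : \bar R :=
  ereal_inf [set s%:E | s in [set s : R | 0 <= s /\
     (leb [set x | (s%:E < `|g x|)%E] <= t%:E)%E]].

Definition lorentz_norm (p q : R) (g : R -> \bar R) : \bar R :=
  poweR (\int[leb]_(t in `]0%R, +oo[%classic)
           (poweR ((t `^ p^-1)%R%:E * rearrangement g t) q * (t^-1)%R%:E))%E q^-1.

Definition in_Lorentz (p q : R) (g : R -> \bar R) : Prop :=
  [/\ measurable_fun [set: R] g,
      {ae leb, forall x, g x \is a fin_num},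
      (forall s : R, 0 < s -> (leb [set x | (s%:E < `|g x|)%E] < +oo)%E)
    & (lorentz_norm p q g < +oo)%E].

Definition in_Linf2 (f : R * R -> R) : Prop :=
  measurable_fun setT f /\
  (ess_sup (leb \x leb)%E (fun z => (`|f z|)%:E) < +oo)%E.

End defs.

From HB Require Import structures.
From mathcomp Require Import all_boot all_order all_algebra.
From mathcomp Require Import all_classical all_reals all_analysis.
From mathcomp Require Import measurable_realfun ess_sup_inf.
From mathcomp Require Import ring lra.
Import Order.TTheory GRing.Theory Num.Theory.
Import numFieldNormedType.Exports.
Local Open Scope classical_set_scope.
Local Open Scope ring_scope.

Set Implicit Arguments. Unset Strict Implicit. Unset Printing Implicit Defensive.

(* The function is f (x, y) = psi (max |x| |y|) with b = 2 ^ p and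
     psi u = \sum_k k / ((k + 1) (k + 2)) * max(0, 1 - b ^ k u).
   The coefficients are not summable, so psi blows up at 0 and f is unbounded
   on every square (0, e]^2.  Each tent is b^k-Lipschitz with values in [0, 1],
   hence 1/p-Hölder with constant (b ^ k) ^ (1/p) = 2 ^ k; so for |x| >= b ^ -n
   the section of f at x has Lip(1/p) norm at most 2 E_n, where
   E_n = \sum_(k < n) k / ((k + 1) (k + 2)) 2 ^ k <= 2 ^ n / (n + 1).
   Thus the rearrangement G^* of the section norms is at most 2 E_(j+1) on the
   block [2 b^-(j+1), 2 b^-j), where t^(1/p) <= 2^(1/p) 2^-j, and the Lorentz
   integral \int (t^(1/p) G^*(t))^q dt/t is dominated by a multiple of
   \sum_j (j + 2)^-q < +oo. *)

Section lip_norm_bounds.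
Context {R : realType}.
Local Notation leb := (@lebesgue_measure R).

Lemma lebesgue_measureT_gt0 : (0 < leb [set: R])%E.
Proof. by rewrite -set_itvNyy lebesgue_measure_itv /= addye // lt0y. Qed.

Lemma supnorm_le (phi : R -> R) (M : R) : (forall t, `|phi t| <= M) ->
  (supnorm phi <= M%:E)%E.
Proof. by move=> h; apply/ess_supP; apply: aeW => t; rewrite lee_fin. Qed.

Lemma supnorm_ge0 (phi : R -> R) : (0 <= supnorm phi)%E.
Proof.
apply: ess_sup_gee; first exact: lebesgue_measureT_gt0.
by apply: aeW => t; rewrite lee_fin.
Qed.

Lemma le_supnorm (phi psi : R -> R) : (forall t, `|phi t| <= `|psi t|) ->
  (supnorm phi <= supnorm psi)%E.
Proof. by move=> h; apply: le_ess_sup; apply: aeW => t; rewrite lee_fin. Qed.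

Lemma lip_seminorm_le (a : R) (phi : R -> R) (M : R) : 0 <= M ->
  (forall h t, 0 < h -> `|phi (t + h) - phi t| <= M * h `^ a) ->
  (lip_seminorm a phi <= M%:E)%E.
Proof.
move=> M0 phi_holder; apply: ge_ereal_sup => _ [h /= + <-].
rewrite in_itv /= andbT => h0.
have hM := supnorm_le (fun t => phi_holder h t h0).
apply: le_trans (lee_wpmul2l _ hM) _; first by rewrite lee_fin powR_ge0.
rewrite -EFinM lee_fin powRN mulrCA mulVf ?mulr1 //.
by rewrite gt_eqF // powR_gt0.
Qed.

Lemma lip_seminorm_ge0 (a : R) (phi : R -> R) : (0 <= lip_seminorm a phi)%E.
Proof.
apply: le_ereal_sup_tmp.
exists ((1 `^ (- a))%:E * supnorm (fun t : R => (phi (t + 1) - phi t)%R))%E.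
  by exists 1 => //; rewrite /= in_itv /= ltr01.
by apply: mule_ge0; [rewrite lee_fin powR_ge0|exact: supnorm_ge0].
Qed.

Lemma lip_norm_ge0 (a : R) (phi : R -> R) : (0 <= lip_norm a phi)%E.
Proof. exact: adde_ge0 (supnorm_ge0 _) (lip_seminorm_ge0 _ _). Qed.

End lip_norm_bounds.

Section real_lemmas.
Context {R : realType}.
Local Notation leb := (@lebesgue_measure R).

Lemma dist_minr_le (c x y : R) : `|Num.min c x - Num.min c y| <= `|x - y|.
Proof.
have n1 := ler_norm (x - y); have n2 := ler_norm (y - x); rewrite distrC in n2.
have [h1|h1] := leP c x; have [h2|h2] := leP c y;
  rewrite ler_norml; apply/andP; split; lra.
Qed.

Lemma dist_maxr_le (c x y : R) : `|Num.max c x - Num.max c y| <= `|x - y|.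
Proof.
have n1 := ler_norm (x - y); have n2 := ler_norm (y - x); rewrite distrC in n2.
have [h1|h1] := leP c x; have [h2|h2] := leP c y;
  rewrite ler_norml; apply/andP; split; lra.
Qed.

Lemma le_powR_of_le1 (a z w : R) : 0 < a <= 1 ->
  0 <= w <= 1 -> w <= z -> w <= z `^ a.
Proof.
move=> /andP[a0 a1] /andP[w0 w1] wz; have z0 := le_trans w0 wz.
have [z1|z1] := leP z 1.
  apply: le_trans wz _; move: z0; rewrite le_eqVlt => /predU1P[<-|z0].
    exact: powR_ge0.
  by apply: ger1_powR => //; rewrite z0 z1.
by apply: le_trans w1 _; rewrite -(powRr0 z); apply: ler_powR; exact: ltW.
Qed.

Lemma powRV (x r : R) : 0 < x -> x^-1 `^ r = (x `^ r)^-1.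
Proof.
move=> x0; apply: (@mulIf _ (x `^ r)); first by rewrite gt_eqF // powR_gt0.
by rewrite mulVf ?gt_eqF ?powR_gt0 // -powRM ?invr_ge0 ?ltW // mulVf ?gt_eqF ?powR1.
Qed.

(* Mean value bound for [x |-> x `^ (1 - q)] on [[x, x + 1]]. *)
Lemma inv_powR_le_telescope (q x : R) : 1 < q -> 1 <= x ->
  (q - 1) * (x + 1)^-1 `^ q <= x `^ (1 - q) - (x + 1) `^ (1 - q).
Proof.
move=> q1 x1; have x0 : 0 < x by lra.
have x10 : 0 < x + 1 by lra.
rewrite powRV // /powR !gt_eqF //.
set L := ln x; set L' := ln (x + 1); set E1 := expR ((1 - q) * L').
have -> : expR ((1 - q) * L) = E1 * expR ((q - 1) * (L' - L)).
  by rewrite /E1 -expRD; congr expR; ring.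
have -> : (expR (q * L'))^-1 = E1 * (x + 1)^-1.
  rewrite -expRN -[in RHS](@lnK _ (x + 1)) ?posrE // -expRN -expRD.
  by congr expR; rewrite /E1 /L'; ring.
have ln_gap : (x + 1)^-1 <= L' - L.
  have : ln (x / (x + 1)) <= - (x + 1)^-1.
    have -> : x / (x + 1) = 1 + (- (x + 1)^-1) by field; lra.
    by apply: le_ln1Dx; rewrite ltrN2 invf_lt1 //; lra.
  by rewrite lnM ?posrE ?invr_gt0 // lnV ?posrE // -/L -/L'; lra.
have exp_ge := expR_ge1Dx ((q - 1) * (L' - L)).
have gap_q : (q - 1) * (x + 1)^-1 <= (q - 1) * (L' - L).
  by rewrite ler_wpM2l // subr_ge0 ltW.
by rewrite mulrCA -[X in _ <= _ - X]mulr1 -mulrBr ler_pM2l ?expR_gt0 //; lra.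
Qed.

Lemma sum_inv_powR_le (q : R) (n : nat) : 1 < q ->
  \sum_(j < n) (j.+2%:R^-1) `^ q <= (q - 1)^-1.
Proof.
move=> q1; have q0 : 0 < q - 1 by lra.
rewrite -(@ler_pM2l _ (q - 1)) // mulfV ?gt_eqF // mulr_sumr.
pose g (k : nat) : R := - (k.+1%:R `^ (1 - q)).
apply: (@le_trans _ _ (\sum_(0 <= k < n) (g k.+1 - g k))).
  rewrite big_mkord; apply: ler_sum => k _; rewrite /g -addn1 natrD.
  have := @inv_powR_le_telescope q k.+1%:R q1; rewrite ler1n => /(_ isT); lra.
rewrite telescope_sumr // /g opprK powR1.
have := powR_ge0 (n.+1%:R : R) (1 - q); lra.
Qed.

Lemma harmonic_sum_unbounded (M : R) : exists n, M <= \sum_(k < n) k.+1%:R^-1.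
Proof.
apply: contrapT => /forallNP hM; apply: (@dvg_harmonic R).
apply: nondecreasing_is_cvgn.
  by apply: nondecreasing_series => k _ _; rewrite invr_ge0.
exists M => _ [n _ <-]; rewrite /series /= big_mkord.
by apply/ltW; rewrite ltNge; exact/negP/hM.
Qed.

Lemma nneseries_le_bound (u : nat -> R) (M : R) :
  (forall j, 0 <= u j) -> (forall n, \sum_(j < n) u j <= M) ->
  (\sum_(0 <= j <oo) (u j)%:E <= M%:E)%E.
Proof.
move=> u0 hM; apply: lime_le.
  by apply: is_cvg_nneseries => n _ _; rewrite lee_fin.
by apply: nearW => n; rewrite sumEFin lee_fin big_mkord.
Qed.

Lemma ae_neq0 (P : R -> Prop) : (forall x, x != 0 -> P x) -> {ae leb, forall x, P x}.
Proof.
move=> hP; exists [set 0%R]; split; [exact: measurable_set1|exact: lebesgue_measure_set1|].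
by move=> x /= nPx; apply: contrapT => x0; apply/nPx/hP/eqP.
Qed.

(* Unlike [ge0_le_integral], no measurability is needed: both integrals are
   suprema over the non-negative simple functions below the integrand. *)
Lemma ge0_le_integral_nonmeasurable (D : set R) (f1 f2 : R -> \bar R) :
  (forall x, D x -> (0 <= f1 x)%E) -> (forall x, D x -> (f1 x <= f2 x)%E) ->
  (\int[leb]_(x in D) f1 x <= \int[leb]_(x in D) f2 x)%E.
Proof.
move=> f10 f12.
have f20 x : D x -> (0 <= f2 x)%E by move=> Dx; exact: le_trans (f10 _ Dx) (f12 _ Dx).
rewrite (ge0_integralE leb f10) (ge0_integralE leb f20).
apply: ereal_sup_le => _ [h hf <-]; exists h => // x.
apply: le_trans (hf x) _; rewrite /patch; case: ifP => // /set_mem Dx.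
exact: f12.
Qed.

Lemma measurable_nonincreasing_normr (N : R -> \bar R) :
  (forall x y, 0 < x -> x <= y -> (N y <= N x)%E) ->
  measurable_fun setT (fun x : R => N `|x|).
Proof.
move=> N_ni; apply: (measurability _ (ErealGenCInfty.measurableE R)) => //.
move=> _ [_ [r ->] <-].
pose S := [set x : R | 0 < x /\ (r%:E <= N x)%E].
have iS : is_interval S.
  move=> x y [x0 _] [_ yr] z /andP[xz zy].
  have z0 := lt_le_trans x0 xz.
  by split => //; exact: le_trans yr (N_ni _ _ z0 zy).
have iNS : is_interval [set x : R | S (- x)].
  move=> x y Sx Sy z /andP[xz zy]; apply: (iS (- y) (- x)) => //.
  by rewrite !lerN2 zy xz.
pose Z := [set x : R | x = 0 /\ (r%:E <= N 0%R)%E].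
have mZ : measurable Z.
  have [r0|r0] := pselect (r%:E <= N 0%R)%E.
    by rewrite (_ : Z = [set 0%R]); [exact: measurable_set1|apply/seteqP; split=> x //=; case].
  by rewrite (_ : Z = set0) //; apply/seteqP; split=> x //= [].
rewrite (_ : _ `&` _ = S `|` [set x | S (- x)] `|` Z).
  by apply: measurableU => //; apply: measurableU; exact: is_interval_measurable.
apply/seteqP; split => x /=.
  rewrite in_itv /= andbT => -[_ h].
  have [x0|x0|x0] := ltgtP x 0.
  - by left; right; rewrite ltr0_norm // in h; split => //; rewrite oppr_gt0.
  - by left; left; rewrite gtr0_norm // in h.
  - by right; rewrite x0 normr0 in h.
rewrite in_itv /= andbT; move=> [[[x0 h]|[x0 h]]|[-> h]]; split => //.
- by rewrite gtr0_norm.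
- by rewrite ltr0_norm // -oppr_gt0.
- by rewrite normr0.
Qed.

Lemma rearrangement_ge0 (g : R -> \bar R) t : (0 <= rearrangement g t)%E.
Proof. by apply: le_ereal_inf_tmp => _ [s [s0 _] <-]; rewrite lee_fin. Qed.

Lemma rearrangement_le (g : R -> \bar R) t s : 0 <= s ->
  (leb [set x | (s%:E < `|g x|)%E] <= t%:E)%E -> (rearrangement g t <= s%:E)%E.
Proof. by move=> s0 h; apply: ge_ereal_inf; exists s%:E => //; exists s. Qed.

End real_lemmas.

Section psi.
Context {R : realType}.
Variables (a b : R).
Hypotheses (a_gt0 : 0 < a) (a_le1 : a <= 1) (b_ge2 : 2 <= b) (b_powR_a : b `^ a = 2).
Local Notation leb := (@lebesgue_measure R).

Definition psi_coef (k : nat) : R := k%:R / (k.+1%:R * k.+2%:R).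

Definition tent (k : nat) (u : R) : R := Num.max 0 (1 - b ^+ k * u).

Definition psi_partial (n : nat) (u : R) : R := \sum_(k < n) psi_coef k * tent k u.

Definition psi_rank (u : R) : nat := (Num.truncn u^-1).+1.

(* [psi u = \sum_k psi_coef k * tent k u]; the series is a finite sum for
   [u > 0], since [tent k u = 0] as soon as [1 <= b ^+ k * u]. *)
Definition psi (u : R) : R := psi_partial (psi_rank u) u.

Definition psi_bound (n : nat) : R := \sum_(k < n) psi_coef k * 2 ^+ k.

Lemma psi_coef_ge0 k : 0 <= psi_coef k.
Proof. by rewrite divr_ge0 // mulr_ge0. Qed.

Lemma tent_ge0 k u : 0 <= tent k u.
Proof. by rewrite /tent le_max lexx. Qed.

Lemma expb_ge1 k : 1 <= b ^+ k.
Proof. by apply: exprn_ege1; apply: le_trans b_ge2; rewrite ler1n. Qed.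

Lemma expb_gt0 k : 0 < b ^+ k.
Proof. exact: lt_le_trans ltr01 (expb_ge1 k). Qed.

Lemma tent_le1 k u : 0 <= u -> tent k u <= 1.
Proof.
by move=> u0; rewrite /tent ge_max ler01 lerBlDr lerDl mulr_ge0 // ltW // expb_gt0.
Qed.

Lemma tent_eq0 k u : 1 <= b ^+ k * u -> tent k u = 0.
Proof. by move=> h; apply/max_idPl; rewrite subr_le0. Qed.

Lemma natr_le_expb k : k%:R <= b ^+ k.
Proof.
elim: k => [|k IH]; first by rewrite expr0.
rewrite exprS -natr1; have := expb_ge1 k.
have : 2 * b ^+ k <= b * b ^+ k by rewrite ler_wpM2r // ltW // expb_gt0.
lra.
Qed.

Lemma expb_mul_ge1_leq u n m : 0 <= u -> (n <= m)%N ->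
  1 <= b ^+ n * u -> 1 <= b ^+ m * u.
Proof.
move=> u0 nm /le_trans; apply; rewrite ler_wpM2r // ler_weXn2l //.
by apply: le_trans b_ge2; rewrite ler1n.
Qed.

Lemma expb_mul_ge1_ler r u n : 0 < r -> r <= u ->
  1 <= b ^+ n * r -> 1 <= b ^+ n * u.
Proof. by move=> r0 ru /le_trans; apply; rewrite ler_wpM2l // ltW // expb_gt0. Qed.

Lemma psi_rank_ge1 u : 0 < u -> 1 <= b ^+ psi_rank u * u.
Proof.
move=> u0; apply: le_trans (ler_wpM2r (ltW u0) (natr_le_expb _)).
rewrite -[leLHS](mulVf (lt0r_neq0 u0)) ler_wpM2r // ltW //.
exact: truncnS_gt.
Qed.

Lemma psi_partial_widen u n m : 0 <= u -> (n <= m)%N -> 1 <= b ^+ n * u ->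
  psi_partial m u = psi_partial n u.
Proof.
move=> u0 nm h; rewrite /psi_partial (big_ord_widen m (fun k => psi_coef k * tent k u) nm).
rewrite [RHS]big_mkcond /=; apply: eq_bigr => i _; case: ifP => // hi.
by rewrite tent_eq0 ?mulr0 // (expb_mul_ge1_leq u0 _ h) // leqNgt hi.
Qed.

Lemma psiE u n : 0 < u -> 1 <= b ^+ n * u -> psi u = psi_partial n u.
Proof.
move=> u0 h; have hr := psi_rank_ge1 u0; rewrite /psi.
have [nr|rn] := leqP n (psi_rank u).
  by rewrite (psi_partial_widen (ltW u0) nr h).
by rewrite (psi_partial_widen (ltW u0) (ltnW rn) hr).
Qed.

Lemma psi_partial_ge0 n u : 0 <= psi_partial n u.
Proof. by apply: sumr_ge0 => k _; rewrite mulr_ge0 ?psi_coef_ge0 ?tent_ge0. Qed.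

Lemma psi_ge0 u : 0 <= psi u.
Proof. exact: psi_partial_ge0. Qed.

Lemma psi_bound_ge0 n : 0 <= psi_bound n.
Proof. by apply: sumr_ge0 => k _; rewrite mulr_ge0 ?psi_coef_ge0 // exprn_ge0. Qed.

Lemma psi_le_bound r u n : 0 < r -> r <= u -> 1 <= b ^+ n * r -> psi u <= psi_bound n.
Proof.
move=> r0 ru h; have u0 := lt_le_trans r0 ru.
rewrite (psiE u0 (expb_mul_ge1_ler r0 ru h)); apply: ler_sum => k _.
rewrite ler_wpM2l ?psi_coef_ge0 //; apply: le_trans (tent_le1 _ (ltW u0)) _.
by apply: exprn_ege1; rewrite ler1n.
Qed.

Lemma psi_nonincreasing u v : 0 < u -> u <= v -> psi v <= psi u.
Proof.
move=> u0 uv; have hu := psi_rank_ge1 u0.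
rewrite (psiE u0 hu) (psiE (lt_le_trans u0 uv) (expb_mul_ge1_ler u0 uv hu)).
apply: ler_sum => k _; rewrite ler_wpM2l ?psi_coef_ge0 // /tent ge_max le_max lexx /=.
by rewrite le_max lerB ?orbT // ler_wpM2l // ltW // expb_gt0.
Qed.

Lemma expb_powR k : (b ^+ k) `^ a = 2 ^+ k.
Proof.
rewrite -powR_mulrn ?ltW ?expb_gt0 ?(expb_gt0 1) // -powRrM mulrC powRrM b_powR_a.
exact: powR_mulrn.
Qed.

(* [tent k] is [b ^+ k]-Lipschitz and takes values in [0, 1], hence
   it is [a]-Hölder with constant [(b ^+ k) `^ a = 2 ^+ k]. *)
Lemma tent_holder k u v : 0 <= u -> 0 <= v ->
  `|tent k u - tent k v| <= 2 ^+ k * `|u - v| `^ a.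
Proof.
move=> u0 v0; have bk := expb_gt0 k.
have -> : 2 ^+ k * `|u - v| `^ a = `|b ^+ k * u - b ^+ k * v| `^ a.
  by rewrite -mulrBr normrM (gtr0_norm bk) powRM ?(ltW bk) // expb_powR.
apply: le_powR_of_le1; first by rewrite a_gt0 a_le1.
  have := tent_le1 k u0; have := tent_le1 k v0; have := tent_ge0 k u; have := tent_ge0 k v.
  by rewrite normr_ge0 ler_norml => *; apply/andP; split; lra.
have hu := mulr_ge0 (ltW bk) u0; have hv := mulr_ge0 (ltW bk) v0.
rewrite /tent; move: hu hv; set x := b ^+ k * u; set y := b ^+ k * v => hx hy.
have n1 := ler_norm (x - y); have n2 := ler_norm (y - x); rewrite distrC in n2.
by rewrite ler_norml; have [h1|h1] := leP (1 - x) 0; have [h2|h2] := leP (1 - y) 0;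
  apply/andP; split; lra.
Qed.

Lemma psi_holder r n u v : 0 < r -> 1 <= b ^+ n * r -> r <= u -> r <= v ->
  `|psi u - psi v| <= psi_bound n * `|u - v| `^ a.
Proof.
move=> r0 h ru rv; have u0 := lt_le_trans r0 ru; have v0 := lt_le_trans r0 rv.
rewrite (psiE u0 (expb_mul_ge1_ler r0 ru h)) (psiE v0 (expb_mul_ge1_ler r0 rv h)).
rewrite /psi_partial -sumrB /psi_bound mulr_suml.
apply: le_trans (ler_norm_sum _ _ _) _; apply: ler_sum => k _.
rewrite -mulrBr normrM (ger0_norm (psi_coef_ge0 k)) -mulrA ler_wpM2l ?psi_coef_ge0 //.
exact: tent_holder (ltW u0) (ltW v0).
Qed.

Lemma psi_bound_le n : psi_bound n <= 2 ^+ n / n.+1%:R.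
Proof.
elim: n => [|n IH]; first by rewrite /psi_bound big_ord0 expr0 divr1.
rewrite /psi_bound big_ord_recr /= -/(psi_bound n).
rewrite (_ : 2 ^+ n.+1 / n.+2%:R = 2 ^+ n / n.+1%:R + psi_coef n * 2 ^+ n) ?lerD2r //.
rewrite /psi_coef exprS -[n.+2]addn2 -[n.+1]addn1 !natrD; field.
have n0 : 0 <= n%:R :> R := ler0n _ n.
by apply/andP; split; apply/negP => /eqP; lra.
Qed.

Lemma psi_coef_ge_inv k : (6 * k.+1%:R)^-1 <= psi_coef k.+1.
Proof.
rewrite /psi_coef -(addn3 k) -(addn2 k) -(addn1 k) !natrD.
set x := k%:R; have x0 : 0 <= x := ler0n _ k.
rewrite -subr_ge0 (_ : _ - _ =
  (5 * x ^+ 2 + 7 * x) / (6 * (x + 1) * (x + 2) * (x + 3))); last first.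
  by field; apply/and3P; split; apply/negP => /eqP; lra.
by apply: divr_ge0; [rewrite addr_ge0 ?mulr_ge0 ?exprn_ge0|rewrite !mulr_ge0] => //; lra.
Qed.

Lemma psi_coef_sum_unbounded (M : R) : exists n, M <= \sum_(k < n) psi_coef k.
Proof.
have [n hn] := harmonic_sum_unbounded (6 * M).
exists n.+1; rewrite big_ord_recl /= {1}/psi_coef mul0r add0r.
have : M <= \sum_(k < n) (6 * k.+1%:R)^-1.
  rewrite -(@ler_pM2l _ 6) ?ltr0n // mulr_sumr.
  by under eq_bigr do rewrite invfM mulrA mulfV ?mul1r //.
by move/le_trans; apply; apply: ler_sum => i _; exact: psi_coef_ge_inv.
Qed.

Lemma psi_partial_leq n m u : (n <= m)%N -> psi_partial n u <= psi_partial m u.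
Proof.
move=> nm; rewrite /psi_partial (big_ord_widen m (fun k => psi_coef k * tent k u) nm).
rewrite [leLHS]big_mkcond /=; apply: ler_sum => i _; case: ifP => // _.
by rewrite mulr_ge0 ?psi_coef_ge0 ?tent_ge0.
Qed.

(* Near [0] the first [n] tents are at least [1/2]. *)
Lemma psi_unbounded (M : R) : exists2 e : R, 0 < e &
  forall u, 0 < u -> u <= e -> M <= psi u.
Proof.
have [n hn] := psi_coef_sum_unbounded (2 * M).
have bn := expb_gt0 n.
exists (2 * b ^+ n)^-1; first by rewrite invr_gt0 mulr_gt0.
move=> u u0 ue; pose N := maxn n (psi_rank u).
have hN : 1 <= b ^+ N * u.
  by apply: (expb_mul_ge1_leq (ltW u0) _ (psi_rank_ge1 u0)); rewrite leq_maxr.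
rewrite (psiE u0 hN); apply: le_trans (psi_partial_leq u (leq_maxl n _)).
have : M <= \sum_(k < n) psi_coef k * 2^-1 by rewrite -mulr_suml; move: hn; lra.
move/le_trans; apply; apply: ler_sum => k _.
rewrite ler_wpM2l ?psi_coef_ge0 // /tent le_max; apply/orP; right.
have : b ^+ k * u <= 2^-1.
  have bk : b ^+ k <= b ^+ n.
    by apply: ler_weXn2l (ltnW (ltn_ord k)); apply: le_trans b_ge2; rewrite ler1n.
  apply: le_trans (ler_wpM2r (ltW u0) bk) _; apply: le_trans (ler_wpM2l (ltW bn) ue) _.
  by rewrite invfM mulrCA mulfV ?gt_eqF // mulr1.
lra.
Qed.

Definition psi_section (r y : R) : R := psi (Num.max r `|y|).

Lemma psi_section_bound r n y : 0 < r -> 1 <= b ^+ n * r ->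
  0 <= psi_section r y <= psi_bound n.
Proof. by move=> r0 h; rewrite psi_ge0 (psi_le_bound r0 _ h) // le_max lexx. Qed.

Lemma psi_section_holder r n h t : 0 < r -> 1 <= b ^+ n * r -> 0 < h ->
  `|psi_section r (t + h) - psi_section r t| <= psi_bound n * h `^ a.
Proof.
move=> r0 hn h0; rewrite /psi_section.
apply: le_trans (psi_holder r0 hn _ _) _; try by rewrite le_max lexx.
rewrite ler_wpM2l ?psi_bound_ge0 // ge0_ler_powR ?nnegrE ?(ltW a_gt0) ?(ltW h0) //.
apply: le_trans (dist_maxr_le _ _ _) _; apply: le_trans (ler_dist_dist _ _) _.
by rewrite addrAC subrr add0r gtr0_norm.
Qed.

Lemma measurable_psi_normr : measurable_fun setT (fun x : R => psi `|x|).
Proof.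
apply/measurable_EFinP; apply: (measurable_nonincreasing_normr (N := EFin \o psi)).
by move=> x y x0 xy; rewrite lee_fin psi_nonincreasing.
Qed.

Lemma measurable_psi_section r : 0 <= r -> measurable_fun setT (psi_section r).
Proof.
move=> r0; have -> : psi_section r = (fun x => psi `|x|) \o (fun y => Num.max r `|y|).
  apply/funext => y /=; rewrite /psi_section [`|Num.max _ _|]ger0_norm //.
  by apply: le_trans r0 _; rewrite le_max lexx.
apply: measurableT_comp; first exact: measurable_psi_normr.
exact: measurable_maxr (measurable_cst r) (@normr_measurable R setT).
Qed.

Lemma lip_norm_psi_section_le r n : 0 < r -> 1 <= b ^+ n * r ->
  (lip_norm a (psi_section r) <= (2 * psi_bound n)%:E)%E.
Proof.
move=> r0 hn; rewrite /lip_norm mulr2n mulrDl mul1r EFinD; apply: leeD.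
  apply: supnorm_le => t; have /andP[h0 h1] := psi_section_bound t r0 hn.
  by rewrite ger0_norm.
apply: lip_seminorm_le; first exact: psi_bound_ge0.
by move=> h t h0; exact: psi_section_holder.
Qed.

Lemma psi_section_in_Lip r : 0 < r -> in_Lip a (psi_section r).
Proof.
move=> r0; have hn := psi_rank_ge1 r0; split.
- exact: measurable_psi_section (ltW r0).
- apply: le_lt_trans (supnorm_le (M := psi_bound (psi_rank r)) _) (ltry _).
  by move=> t; have /andP[h0 h1] := psi_section_bound t r0 hn; rewrite ger0_norm.
- apply: le_lt_trans (lip_seminorm_le (M := psi_bound (psi_rank r)) _ _) (ltry _).
    exact: psi_bound_ge0.
  by move=> h t h0; exact: psi_section_holder.
Qed.

Lemma psi_sectionE r r' y : 0 < r -> r <= r' ->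
  psi_section r' y = Num.min (psi r') (psi_section r y).
Proof.
move=> r0 rr'; rewrite /psi_section; have [yr|yr] := leP r' `|y|.
  rewrite (max_idPr (le_trans rr' yr)).
  by apply/esym/min_idPr/psi_nonincreasing => //; exact: lt_le_trans rr'.
apply/esym/min_idPl/psi_nonincreasing; first by apply: lt_le_trans r0 _; rewrite le_max lexx.
by rewrite ge_max rr' ltW.
Qed.

Lemma lip_norm_psi_section_nonincreasing r r' : 0 < r -> r <= r' ->
  (lip_norm a (psi_section r') <= lip_norm a (psi_section r))%E.
Proof.
move=> r0 rr'; apply: leeD.
  apply: le_supnorm => t; rewrite (psi_sectionE _ r0 rr').
  have /andP[h0 _] := psi_section_bound t r0 (psi_rank_ge1 r0).
  have h1 := psi_ge0 r'.
  by rewrite !ger0_norm ?le_min ?h0 ?h1 // ge_min lexx orbT.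
apply: ge_ereal_sup => _ [h /= h0 <-]; apply: le_ereal_sup_tmp; exists
  ((h `^ (- a))%:E * supnorm (fun t : R => (psi_section r (t + h) - psi_section r t)%R))%E.
  by exists h.
apply: lee_wpmul2l; first by rewrite lee_fin powR_ge0.
by apply: le_supnorm => t; rewrite !(psi_sectionE _ r0 rr'); exact: dist_minr_le.
Qed.

Definition section_norm (x : R) : \bar R := lip_norm a (psi_section `|x|).

Lemma section_norm_ge0 x : (0 <= section_norm x)%E.
Proof. exact: lip_norm_ge0. Qed.

Lemma section_norm_le x n : 1 <= b ^+ n * `|x| ->
  (section_norm x <= (2 * psi_bound n)%:E)%E.
Proof.
move=> h; apply: (lip_norm_psi_section_le _ h); rewrite normr_gt0.
by apply: contraTneq h => ->; rewrite normr0 mulr0 ler10.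
Qed.

Lemma measurable_section_norm : measurable_fun setT section_norm.
Proof.
apply: (measurable_nonincreasing_normr (N := fun r => lip_norm a (psi_section r))).
exact: lip_norm_psi_section_nonincreasing.
Qed.

Lemma section_norm_fin_num : {ae leb, forall x, section_norm x \is a fin_num}.
Proof.
apply: ae_neq0 => x x0; have x0' : 0 < `|x| by rewrite normr_gt0.
rewrite ge0_fin_numE ?section_norm_ge0 //.
exact: le_lt_trans (section_norm_le (psi_rank_ge1 x0')) (ltry _).
Qed.

Lemma section_norm_levelE s :
  [set x | (s%:E < `|section_norm x|)%E] = [set x | (s%:E < section_norm x)%E].
Proof. by apply/seteqP; split => x /=; rewrite gee0_abs ?section_norm_ge0. Qed.

(* [section_norm] exceeds [2 * psi_bound J] only on [|x| < b ^- J]. *)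
Lemma section_norm_level_measure_le s J : 2 * psi_bound J <= s ->
  (leb [set x | (s%:E < `|section_norm x|)%E] <= (2 * (b ^+ J)^-1)%:E)%E.
Proof.
move=> hs; have bJ := expb_gt0 J.
have sub : [set x | (s%:E < `|section_norm x|)%E] `<=` `](- (b ^+ J)^-1), (b ^+ J)^-1[.
  move=> x /=; rewrite gee0_abs ?section_norm_ge0 // in_itv /= -ltr_norml => hx.
  rewrite ltNge; apply/negP => hxJ.
  have hJ : 1 <= b ^+ J * `|x| by rewrite -(mulfV (lt0r_neq0 bJ)) ler_wpM2l ?(ltW bJ).
  by have := lt_le_trans hx (section_norm_le hJ); rewrite lte_fin; lra.
apply: le_trans (le_measure leb _ _ sub) _.
- rewrite inE section_norm_levelE -[X in measurable X]setTI.
  exact: emeasurable_fun_o_infty measurableT measurable_section_norm _.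
- by rewrite inE; exact: measurable_itv.
have bJ' : 0 < (b ^+ J)^-1 by rewrite invr_gt0.
by rewrite /= lebesgue_measure_itv /= lte_fin gtrN //= -EFinD lee_fin; lra.
Qed.

Lemma section_norm_level_finite s : 0 < s ->
  (leb [set x | (s%:E < `|section_norm x|)%E] < +oo)%E.
Proof.
move=> s0; apply: le_lt_trans (@section_norm_level_measure_le s 0 _) (ltry _).
by rewrite /psi_bound big_ord0 mulr0 ltW.
Qed.

Lemma rearrangement_section_norm t J : 2 * (b ^+ J)^-1 <= t ->
  exists2 r, rearrangement section_norm t = r%:E & 0 <= r <= 2 * psi_bound J.
Proof.
move=> ht; have := rearrangement_ge0 section_norm t.
have : (rearrangement section_norm t <= (2 * psi_bound J)%:E)%E.
  apply: rearrangement_le; first by rewrite mulr_ge0 // psi_bound_ge0.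
  by apply: le_trans (section_norm_level_measure_le (lexx _)) _; rewrite lee_fin.
by case: (rearrangement _ _) => [r| |] //= h1 h0; exists r; rewrite // -!lee_fin h0.
Qed.

Variable q : R.
Hypothesis q_gt1 : 1 < q.

Definition lorentz_integrand (t : R) : \bar R :=
  (poweR ((t `^ a)%:E * rearrangement section_norm t) q * (t^-1)%:E)%E.

Definition block (j : nat) : set R := `[2 * (b ^+ j.+1)^-1, 2 * (b ^+ j)^-1[.

(* On [block j]: [t ^ a <= 2 ^ a / 2 ^+ j], [t^-1 <= b ^+ j.+1 / 2], and the
   rearrangement is at most [2 * psi_bound j.+1]. *)
Definition block_bound (j : nat) : R :=
  (2 `^ a * (2 ^+ j)^-1 * (2 * psi_bound j.+1)) `^ q * (b ^+ j.+1 / 2).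

Definition block_step (j : nat) (t : R) : \bar R := (block_bound j * \1_(block j) t)%:E.

Lemma block_bound_ge0 j : 0 <= block_bound j.
Proof. by rewrite mulr_ge0 ?powR_ge0 // divr_ge0 // ltW // expb_gt0. Qed.

Lemma block_step_ge0 j t : (0 <= block_step j t)%E.
Proof. by rewrite lee_fin mulr_ge0 ?block_bound_ge0. Qed.

Lemma lorentz_integrand_ge0 t : 0 < t -> (0 <= lorentz_integrand t)%E.
Proof. by move=> t0; rewrite mule_ge0 ?poweR_ge0 // lee_fin invr_ge0 ltW. Qed.

Lemma lorentz_integrand_le_block_bound t j : block j t ->
  (lorentz_integrand t <= (block_bound j)%:E)%E.
Proof.
rewrite /block /= in_itv /= => /andP[ht1 ht2].
have bj := expb_gt0 j; have bj1 := expb_gt0 j.+1.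
have t0 : 0 < t by apply: lt_le_trans ht1; rewrite mulr_gt0 // invr_gt0.
rewrite /lorentz_integrand; have [r -> /andP[r0 r1]] := rearrangement_section_norm ht1.
rewrite (_ : ((t `^ a)%:E * r%:E)%E = (t `^ a * r)%:E) // poweR_EFin -EFinM lee_fin.
have t_powR : t `^ a * r <= 2 `^ a * (2 ^+ j)^-1 * (2 * psi_bound j.+1).
  apply: ler_pM; rewrite ?powR_ge0 //.
  rewrite (_ : 2 `^ a * (2 ^+ j)^-1 = (2 * (b ^+ j)^-1) `^ a); last first.
    by rewrite powRM ?invr_ge0 ?(ltW bj) // powRV // expb_powR.
  by apply: ge0_ler_powR; rewrite ?nnegrE ?(ltW a_gt0) ?(ltW t0) //; lra.
have t_inv : t^-1 <= b ^+ j.+1 / 2.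
  rewrite (_ : b ^+ j.+1 / 2 = (2 * (b ^+ j.+1)^-1)^-1); last by rewrite invfM invrK mulrC.
  by rewrite lef_pV2 // posrE mulr_gt0 // invr_gt0.
apply: ler_pM t_inv; [exact: powR_ge0|by rewrite invr_ge0 ltW|].
have r_t := mulr_ge0 (powR_ge0 t a) r0.
apply: (ge0_ler_powR (ltW (lt_trans ltr01 q_gt1)) _ _ t_powR); rewrite nnegrE //.
exact: le_trans r_t t_powR.
Qed.

Lemma lorentz_integrand_eq0 t : 2 <= t -> lorentz_integrand t = 0%E.
Proof.
move=> ht; rewrite /lorentz_integrand.
have ht0 : 2 * (b ^+ 0)^-1 <= t by rewrite expr0 invr1 mulr1.
have [r -> /andP[r0]] := rearrangement_section_norm ht0.
rewrite /psi_bound big_ord0 mulr0 => r1; rewrite (_ : r = 0); last lra.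
rewrite mule0 poweR_EFin powR0 ?mul0e //.
by rewrite gt_eqF // (lt_trans ltr01 q_gt1).
Qed.

Lemma exists_block t : 0 < t < 2 -> exists j, block j t.
Proof.
move=> /andP[t0 t2].
have t20 : 0 < t / 2 by rewrite divr_gt0.
have exP : exists j, 2 * (b ^+ j.+1)^-1 <= t.
  exists (psi_rank (t / 2)).
  have bk := expb_gt0 (psi_rank (t / 2)).+1.
  have h := expb_mul_ge1_leq (ltW t20) (leqnSn _) (psi_rank_ge1 t20).
  rewrite -(ler_pM2l bk) mulrCA mulfV ?gt_eqF // mulr1.
  by move: h; rewrite mulrA; lra.
case: (ex_minnP exP) => j Pj jmin; exists j; rewrite /block /= in_itv /= Pj /=.
case: j Pj jmin => [|i] _ jmin; first by rewrite expr0 invr1 mulr1.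
by rewrite ltNge; apply/negP => /jmin; rewrite ltnn.
Qed.

Lemma lorentz_integrand_le_series t : 0 < t ->
  (lorentz_integrand t <= \sum_(0 <= j <oo) block_step j t)%E.
Proof.
move=> t0; have [t2|t2] := leP 2 t.
  by rewrite lorentz_integrand_eq0 //; apply: nneseries_ge0 => n _ _; exact: block_step_ge0.
have [j jt] : exists j, block j t by apply: exists_block; rewrite t0 t2.
apply: le_trans (lorentz_integrand_le_block_bound jt) _.
apply: le_trans (nneseries_lim_ge j.+1 (fun n _ _ => block_step_ge0 n t)).
rewrite big_nat_recr //= /block_step indicE mem_set // mulr1.
by apply: leeDr; apply: sume_ge0 => k _; exact: block_step_ge0.
Qed.

Lemma measurable_block_step j : measurable_fun setT (block_step j).
Proof.
apply/measurable_EFinP; apply: measurable_funM; first exact: measurable_cst.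
by apply: measurable_indic; exact: measurable_itv.
Qed.

Lemma integral_block_step_le (D : set R) j : measurable D ->
  (\int[leb]_(t in D) block_step j t <= (block_bound j * (2 * (b ^+ j)^-1))%:E)%E.
Proof.
move=> mD; have bj := expb_gt0 j; have bj1 := expb_gt0 j.+1.
rewrite (@eq_integral _ _ _ leb D
  (fun t => (block_bound j)%:E * (\1_(block j) t)%:E)%E); last first.
  by move=> t _; rewrite /block_step EFinM.
rewrite ge0_integralZl_EFin ?block_bound_ge0 //; last first.
  by apply/measurable_EFinP/measurable_funTS/measurable_indic; exact: measurable_itv.
rewrite integral_indic //; last exact: measurable_itv.
rewrite (EFinM (block_bound j)); apply: lee_wpmul2l; first by rewrite lee_fin block_bound_ge0.
apply: le_trans (measureIl _ _ _) _; [exact: measurable_itv|exact: mD|].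
have lt_ends : 2 * (b ^+ j.+1)^-1 < 2 * (b ^+ j)^-1.
  rewrite ltr_pM2l // ltf_pV2 ?posrE // exprS ltr_pMl //.
  by apply: lt_le_trans b_ge2; rewrite ltr1n.
rewrite /block /= lebesgue_measure_itv /= lte_fin lt_ends -EFinD lee_fin.
by rewrite gerDl oppr_le0 mulr_ge0 // invr_ge0 ltW.
Qed.

Lemma block_bound_mul_le j : block_bound j * (2 * (b ^+ j)^-1) <=
  ((2 `^ a * 4) `^ q * b) * j.+2%:R^-1 `^ q.
Proof.
have bj := expb_gt0 j; have e2j : (0 : R) < 2 ^+ j by rewrite exprn_gt0.
have b0 : 0 <= b by apply: le_trans b_ge2; rewrite ler0n.
rewrite /block_bound -mulrA.
have -> : b ^+ j.+1 / 2 * (2 * (b ^+ j)^-1) = b by rewrite exprS; field; rewrite gt_eqF.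
rewrite [in X in _ <= X]mulrAC ler_wpM2r // -powRM ?mulr_ge0 ?powR_ge0 //.
apply: ge0_ler_powR; rewrite ?nnegrE ?mulr_ge0 ?powR_ge0 ?psi_bound_ge0 ?invr_ge0 ?(ltW e2j) //.
  exact: ltW (lt_trans ltr01 q_gt1).
rewrite -mulrA -[X in _ <= X]mulrA ler_wpM2l ?powR_ge0 //.
apply: (@le_trans _ _ ((2 ^+ j)^-1 * (2 * (2 ^+ j.+1 / j.+2%:R)))).
  by rewrite ler_wpM2l ?invr_ge0 ?(ltW e2j) // ler_wpM2l // psi_bound_le.
rewrite exprS (_ : (2 ^+ j)^-1 * (2 * (2 * 2 ^+ j / j.+2%:R)) = 4 / j.+2%:R) //.
have j0 : 0 <= j%:R :> R := ler0n _ j.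
by field; rewrite (gt_eqF e2j) andbT; apply/negP => /eqP; lra.
Qed.

Lemma integral_lorentz_integrand_le :
  (\int[leb]_(t in `]0%R, +oo[) lorentz_integrand t <=
     (((2 `^ a * 4) `^ q * b) * (q - 1)^-1)%:E)%E.
Proof.
have C0 : 0 <= (2 `^ a * 4) `^ q * b.
  by rewrite mulr_ge0 ?powR_ge0 //; apply: le_trans b_ge2; rewrite ler0n.
apply: le_trans (ge0_le_integral_nonmeasurable
  (f2 := fun t => \sum_(0 <= j <oo) block_step j t)%E _ _) _.
- by move=> t; rewrite /= in_itv /= andbT; exact: lorentz_integrand_ge0.
- by move=> t; rewrite /= in_itv /= andbT; exact: lorentz_integrand_le_series.
rewrite integral_nneseries //; last 2 first.
- by move=> n; apply: measurable_funTS; exact: measurable_block_step.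
- by move=> n t _; exact: block_step_ge0.
apply: le_trans (lee_nneseries (v := fun j => (((2 `^ a * 4) `^ q * b) *
  j.+2%:R^-1 `^ q)%:E) (P := xpredT) (N := 0) _ _) _.
- by move=> i _ _; apply: integral_ge0 => t _; exact: block_step_ge0.
- move=> n _; apply: le_trans (integral_block_step_le n (measurable_itv _)) _.
  by rewrite lee_fin block_bound_mul_le.
apply: nneseries_le_bound => [j|n]; first by rewrite mulr_ge0 // powR_ge0.
by rewrite -mulr_sumr ler_wpM2l // sum_inv_powR_le.
Qed.

Lemma section_norm_in_Lorentz : in_Lorentz a^-1 q section_norm.
Proof.
split.
- exact: measurable_section_norm.
- exact: section_norm_fin_num.
- exact: section_norm_level_finite.
- rewrite /lorentz_norm invrK; apply: poweR_lty.
  exact: le_lt_trans integral_lorentz_integrand_le (ltry _).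
Qed.

End psi.

Lemma not_in_Linf2_unbounded_near0 (R : realType) (f : R * R -> R) :
  (forall M, exists2 e : R, 0 < e &
     forall x y, 0 < x <= e -> 0 < y <= e -> M < `|f (x, y)|) ->
  ~ in_Linf2 f.
Proof.
move=> f_unbounded [_]; set S := ess_sup _ _ => S_lty.
have [M /ess_supP[N [mN N0 sub]]] : exists M : R, (S <= M%:E)%E.
  move: S_lty; case: S => [r| |] // _; first by exists r.
  by exists 0; rewrite leNye.
have [e e0 he] := f_unbounded M.
pose square : set (R * R) := `]0, e] `*` `]0, e].
have squareN : square `<=` N.
  move=> [x y] [/=]; rewrite !in_itv /= => xe ye; apply: sub => /=.
  by apply/negP; rewrite -ltNge lte_fin he.
have msquare : measurable square by apply: measurableX; exact: measurable_itv.
have : ((lebesgue_measure \x lebesgue_measure) square <=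
    (lebesgue_measure \x lebesgue_measure) N)%E.
  exact (le_measure (lebesgue_measure \x lebesgue_measure)%E
    (mem_set msquare) (mem_set mN) squareN).
rewrite N0 product_measure1E; try exact: measurable_itv.
rewrite /= lebesgue_measure_itv /= lte_fin e0 sube0 -EFinM lee_fin.
by have := mulr_gt0 e0 e0; lra.
Qed.

Definition psi_max (R : realType) (b : R) (z : R * R) : R :=
  psi b (Num.max `|z.1| `|z.2|).

Lemma measurable_psi_max (R : realType) (b : R) : 2 <= b ->
  measurable_fun setT (psi_max b).
Proof.
move=> b_ge2.
have -> : psi_max b = (fun x => psi b `|x|) \o (fun z : R * R => Num.max `|z.1| `|z.2|).
  by apply/funext => z /=; rewrite [`|Num.max _ _|]ger0_norm // le_max normr_ge0.
apply: measurableT_comp; first exact: measurable_psi_normr.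
by apply: measurable_maxr; apply: measurableT_comp; [exact: normr_measurable|
  exact: measurable_fst|exact: normr_measurable|exact: measurable_snd].
Qed.

Lemma psi_max_sectionr (R : realType) (b y : R) :
  (fun x => psi_max b (x, y)) = psi_section b `|y|.
Proof. by apply/funext => x; rewrite /psi_max /psi_section maxC. Qed.

Lemma not_in_Linf2_psi_max (R : realType) (b : R) : 2 <= b -> ~ in_Linf2 (psi_max b).
Proof.
move=> b_ge2; apply: not_in_Linf2_unbounded_near0 => M.
have [e e0 he] := psi_unbounded b_ge2 (M + 1).
exists e => // x y /andP[x0 xe] /andP[y0 ye]; rewrite ger0_norm ?psi_ge0 //.
apply: lt_le_trans (he _ _ _); first lra.
  by rewrite lt_max gtr0_norm ?x0.
by rewrite ge_max !gtr0_norm ?xe.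
Qed.

Theorem proposition2p2 (R : realType) (p q : R) :
  1 < p -> 1 < q ->
  exists f : R * R -> R,
    [/\ measurable_fun setT f,
        {ae (@lebesgue_measure R), forall x, in_Lip p^-1 (fun y => f (x, y))},
        {ae (@lebesgue_measure R), forall y, in_Lip p^-1 (fun x => f (x, y))},
        in_Lorentz p q (fun x => lip_norm p^-1 (fun y => f (x, y))) /\
        in_Lorentz p q (fun y => lip_norm p^-1 (fun x => f (x, y)))
      & ~ in_Linf2 f].
Proof.
move=> p1 q1; have p0 : 0 < p by exact: lt_trans ltr01 p1.
have a0 : 0 < p^-1 by rewrite invr_gt0.
have a1 : p^-1 <= 1 by rewrite invf_le1 // ltW.
pose b := 2 `^ p.
have b2 : 2 <= b by apply: le1r_powR; [rewrite ler1n|exact: ltW].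
have ba : b `^ p^-1 = 2 by rewrite /b -powRrM mulfV ?gt_eqF // powRr1.
have := section_norm_in_Lorentz a0 a1 b2 ba q1; rewrite invrK => lorentz.
exists (psi_max b); split.
- exact: measurable_psi_max.
- by apply: ae_neq0 => x x0; apply: (psi_section_in_Lip (r := `|x|) a0 a1 b2 ba); rewrite normr_gt0.
- apply: ae_neq0 => y y0; rewrite psi_max_sectionr.
  by apply: (psi_section_in_Lip a0 a1 b2 ba); rewrite normr_gt0.
- split; first exact: lorentz.
  suff -> : (fun y => lip_norm p^-1 (fun x => psi_max b (x, y))) = section_norm p^-1 b.
    exact: lorentz.
  by apply/funext => y; rewrite psi_max_sectionr.
- exact: not_in_Linf2_psi_max.
Qed.
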